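(* Let $A>0$. For every $w\ge 0$ the initial value problem $$v'(t)=-v(t)^2\Big(\sqrt{A^2t^2+w}+v(t)\Big),\qquad v(0)=1,$$ has a unique solution $v(\cdot;w)\in C^1([0,\infty))$ defined on all of $[0,\infty)$, and it takes values in $(0,1]$. Moreover: (1) for fixed $w$, $t\mapsto v(t;w)$ is strictly decreasing on $[0,\infty)$; for fixed $t>0$, $w\mapsto v(t;w)$ is strictly decreasing on $[0,\infty)$; (2) for all $t>0$ and $w\ge0$, $$v(t;w)<\frac{2}{2+t\sqrt{A^2t^2+w}};$$ in particular $v(t;w)\to0$ as $t\to\infty$; (3) the map $w\mapsto v(\cdot;w)$ is continuous from $[0,\infty)$ into $L^\infty(0,\infty)$.
   Context: $A>0$ is a fixed constant (a dimensionless parameter of a model of a viscous jet falling under gravity onto a moving belt). *)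

From Stdlib Require Import Reals Lra.
From Coquelicot Require Import Coquelicot.
Open Scope R_scope.

Definition rhs (A w t x : R) : R := - x ^ 2 * (sqrt (A ^ 2 * t ^ 2 + w) + x).

Definition has_deriv_on_nonneg (v dv : R -> R) : Prop :=
  forall t, 0 <= t -> forall eps, 0 < eps -> exists delta, 0 < delta /\
    forall s, 0 <= s -> Rabs (s - t) < delta ->
      Rabs (v s - v t - dv t * (s - t)) <= eps * Rabs (s - t).

Definition cont_on_nonneg (g : R -> R) : Prop :=
  forall t, 0 <= t -> forall eps, 0 < eps -> exists delta, 0 < delta /\
    forall s, 0 <= s -> Rabs (s - t) < delta -> Rabs (g s - g t) < eps.

Definition is_solution (A w : R) (v : R -> R) : Prop :=
  v 0 = 1 /\
  exists dv : R -> R,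
    has_deriv_on_nonneg v dv /\ cont_on_nonneg dv /\
    (forall t, 0 <= t -> dv t = rhs A w t (v t)).

From Stdlib Require Import Reals Lra Lia.
From Coquelicot Require Import Coquelicot.
Open Scope R_scope.

(* For [U = 1 / v] the equation reads [U' = F(t) + 1 / U], [U(0) = 1], with
   [F(t) = sqrt (A^2 t^2 + w)].  Solutions stay [>= 1], so [1 / U] may be replaced
   by the globally 1-Lipschitz [1 / max 1 U]; Picard iteration then converges on
   all of [R] in the weighted norm [sup |u t| exp (-2 |t|)], giving a global
   [C^1] solution.  Linear differential inequalities, solved with the integrating
   factor [exp (int q)], give uniqueness, strict monotonicity in [w] and
   [|U_w - U_w0| <= t sqrt |w - w0|].  Since [F s >= (s / t) F t] on [[0, t]],
   integrating the equation gives [U t > 1 + t F(t) / 2], which is bound (2); it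
   also bounds [t v(t)] uniformly, whence continuity in [w] uniformly in [t]. *)

(* Coquelicot's [continuous_plus] etc. cannot find the two summands by
   unification, so they are supplied by matching. *)
Ltac continuity_R :=
  repeat first
  [ apply continuous_const | apply continuous_id | assumption
  | match goal with
    | |- continuous (fun y => @?f y + @?g y) _ => apply (continuous_plus f g)
    | |- continuous (fun y => @?f y * @?g y) _ => apply (continuous_mult f g)
    | |- continuous (fun y => @?f y - @?g y) _ => apply (continuous_minus f g)
    | |- continuous (fun y => - @?f y) _ => apply (continuous_opp f)
    | |- continuous (fun y => @?f y ^ ?n) _ =>
        apply (continuous_comp f (fun z => z ^ n));
        [| apply (ex_derive_continuous (fun z => z ^ n)); auto_derive; exact I]
    | |- continuous (fun y => sqrt (@?f y)) _ => apply (continuous_sqrt_comp f)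
    | |- continuous (fun y => exp (@?f y)) _ => apply (continuous_exp_comp f)
    | |- continuous (fun y => Rabs (@?f y)) _ => apply (continuous_Rabs_comp f)
    end ].

Lemma continuous_eps_delta (f : R -> R) x :
  continuous f x <->
  forall eps, 0 < eps -> exists delta, 0 < delta /\
    forall y, Rabs (y - x) < delta -> Rabs (f y - f x) < eps.
Proof.
  split.
  - intros H%continuity_pt_filterlim eps he.
    destruct (H eps he) as [d [hd Hd]]. exists d. split; auto.
    intros y hy. destruct (Req_dec y x) as [->|ne].
    + rewrite Rminus_diag, Rabs_R0. exact he.
    + apply Hd. split; [split; [exact I|auto]|exact hy].
  - intros H. apply continuity_pt_filterlim. intros eps he.
    destruct (H eps he) as [d [hd Hd]]. exists d. split; auto.
    intros y [_ hy]. apply Hd, hy.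
Qed.

Lemma continuous_of_lipschitz (g : R -> R) x :
  (forall y z, Rabs (g y - g z) <= Rabs (y - z)) -> continuous g x.
Proof.
  intros Hg. apply continuous_eps_delta. intros eps he. exists eps. split; auto.
  intros y hy. eapply Rle_lt_trans; [apply Hg|exact hy].
Qed.

Lemma ex_RInt_of_continuous (h : R -> R) a b :
  (forall x, continuous h x) -> ex_RInt h a b.
Proof. intros hc. apply (@ex_RInt_continuous R_CompleteNormedModule). auto. Qed.

Lemma is_derive_RInt_continuous (h : R -> R) a x :
  (forall y, continuous h y) -> is_derive (fun t => RInt h a t) x (h x).
Proof.
  intros hc. apply is_derive_RInt with (a := a); auto.
  apply filter_forall. intros b. apply RInt_correct, ex_RInt_of_continuous. auto.
Qed.

Lemma abs_RInt_le_derive (k h dh : R -> R) a b : a <= b ->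
  (forall x, continuous k x) -> (forall x, continuous dh x) ->
  (forall x, a <= x <= b -> is_derive h x (dh x)) ->
  (forall x, a <= x <= b -> Rabs (k x) <= dh x) ->
  Rabs (RInt k a b) <= h b - h a.
Proof.
  intros hab hk hdh hh hb.
  assert (Hdh : is_RInt dh a b (h b - h a)).
  { apply (is_RInt_derive h dh); intros x hx;
      rewrite Rmin_left, Rmax_right in hx by lra; auto. }
  rewrite <- (is_RInt_unique _ _ _ _ Hdh).
  eapply Rle_trans; [apply abs_RInt_le; [lra | apply ex_RInt_of_continuous; auto]|].
  apply RInt_le; [lra | | eexists; eauto | intros x hx; apply hb; lra].
  apply ex_RInt_of_continuous. intros; apply continuous_Rabs_comp; auto.
Qed.

(* The weight [exp (2 |t|)] is what makes the Picard map a contraction with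
   factor [1/2] on all of [R] for a [1]-Lipschitz nonlinearity. *)
Lemma RInt_weighted_bound (k : R -> R) M t : (forall x, continuous k x) ->
  (forall s, Rabs (k s) <= M * exp (2 * Rabs s)) ->
  Rabs (RInt k 0 t) <= M * exp (2 * Rabs t) / 2.
Proof.
  intros hk hb.
  assert (hM : 0 <= M).
  { specialize (hb 0). pose proof (Rabs_pos (k 0)). pose proof (exp_pos (2 * Rabs 0)). nra. }
  destruct (Rle_or_lt 0 t) as [ht|ht].
  - eapply Rle_trans.
    + apply (abs_RInt_le_derive k (fun s => M * exp (2 * s) / 2) (fun s => M * exp (2 * s)));
        auto.
      * intros x. continuity_R.
      * intros x _. auto_derive; auto. field.
      * intros x hx. rewrite <- (Rabs_pos_eq x) at 2 by lra. apply hb.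
    + rewrite Rabs_pos_eq, Rmult_0_r, exp_0 by lra. lra.
  - rewrite <- opp_RInt_swap by (apply ex_RInt_of_continuous; auto).
    unfold opp; simpl. rewrite Rabs_Ropp. eapply Rle_trans.
    + apply (abs_RInt_le_derive k (fun s => - M * exp (- 2 * s) / 2)
               (fun s => M * exp (- 2 * s))); auto; try lra.
      * intros x. continuity_R.
      * intros x _. auto_derive; auto. field.
      * intros x hx. replace (-2 * x) with (2 * Rabs x) by (rewrite Rabs_left1 by lra; ring).
        apply hb.
    + rewrite Rabs_left, Rmult_0_r, exp_0 by lra.
      replace (-2 * t) with (2 * - t) by ring. lra.
Qed.

Lemma MVT_closed (f df : R -> R) a b : a < b ->
  (forall x, a <= x <= b -> is_derive f x (df x)) ->
  exists c, a <= c <= b /\ f b - f a = df c * (b - a).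
Proof.
  intros hab hf.
  destruct (MVT_gen f a b df) as [c [hc E]]; rewrite ?Rmin_left, ?Rmax_right in * by lra.
  - intros x hx. apply hf; lra.
  - intros x hx. apply continuity_pt_filterlim, (ex_derive_continuous f).
    exists (df x). apply hf; lra.
  - exists c. split; assumption.
Qed.

Lemma derive_pos_lt (f df : R -> R) a b : a < b ->
  (forall x, a <= x <= b -> is_derive f x (df x)) ->
  (forall x, a <= x <= b -> 0 < df x) -> f a < f b.
Proof.
  intros hab hf hdf. destruct (MVT_closed f df a b hab hf) as [c [hc E]].
  specialize (hdf c hc). nra.
Qed.

Lemma derive_nonneg_le (f df : R -> R) a b : a <= b ->
  (forall x, a <= x <= b -> is_derive f x (df x)) ->
  (forall x, a <= x <= b -> 0 <= df x) -> f a <= f b.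
Proof.
  intros [hab | ->] hf hdf; [|lra].
  destruct (MVT_closed f df a b hab hf) as [c [hc E]].
  specialize (hdf c hc). nra.
Qed.

Lemma exp_le_exp x y : x <= y -> exp x <= exp y.
Proof. intros [h | ->]; [left; apply exp_increasing, h | lra]. Qed.

Lemma half_pow_lt e : 0 < e -> exists N, (/ 2) ^ N < e.
Proof.
  intros he. destruct (pow_lt_1_zero (/ 2)) with e as [N HN]; [rewrite Rabs_pos_eq; lra | auto |].
  exists N. specialize (HN N (le_n N)). rewrite Rabs_pos_eq in HN; auto.
  apply pow_le. lra.
Qed.

Lemma le_0_of_le_half_pow x C : (forall n, x <= C * (/ 2) ^ n) -> x <= 0.
Proof.
  intros H. destruct (Rle_or_lt x 0) as [h|h]; auto.
  destruct (half_pow_lt (x / (Rabs C + 1))) as [N HN].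
  { apply Rdiv_lt_0_compat; [lra|]. pose proof (Rabs_pos C); lra. }
  specialize (H N). pose proof (pow_lt (/ 2) N ltac:(lra)). pose proof (Rabs_pos C).
  assert (C * (/ 2) ^ N <= Rabs C * (/ 2) ^ N) by (apply Rmult_le_compat_r; [lra | apply Rle_abs]).
  apply Rmult_lt_compat_r with (r := Rabs C + 1) in HN; [|lra].
  replace (x / (Rabs C + 1) * (Rabs C + 1)) with x in HN by (field; lra). nra.
Qed.

Section Picard.

Variables (f g : R -> R) (y0 : R).
Hypothesis f_cont : forall t, continuous f t.
Hypothesis g_lipschitz : forall x y, Rabs (g x - g y) <= Rabs (x - y).
Hypothesis g_range : forall x, 0 <= g x <= 1.

Definition picard_map (p : R -> R) (t : R) : R := y0 + RInt (fun s => f s + g (p s)) 0 t.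

Fixpoint picard (n : nat) : R -> R :=
  match n with
  | O => fun _ => y0
  | S m => picard_map (picard m)
  end.

Lemma integrand_continuous (p : R -> R) :
  (forall t, continuous p t) -> forall t, continuous (fun s => f s + g (p s)) t.
Proof.
  intros hp t. apply (continuous_plus f); auto.
  apply continuous_comp; auto. apply continuous_of_lipschitz, g_lipschitz.
Qed.

Lemma is_derive_picard_map (p : R -> R) t : (forall t, continuous p t) ->
  is_derive (picard_map p) t (f t + g (p t)).
Proof.
  intros hp. rewrite <- (Rplus_0_l (f t + g (p t))).
  apply (@is_derive_plus R_AbsRing R_NormedModule (fun _ => y0));
    [apply (@is_derive_const R_AbsRing R_NormedModule)|].
  apply (is_derive_RInt_continuous (fun s => f s + g (p s))), integrand_continuous, hp.
Qed.

Lemma picard_continuous n t : continuous (picard n) t.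
Proof.
  revert t; induction n as [|n IH]; intros t; [apply continuous_const|].
  apply (ex_derive_continuous (picard (S n))). eexists. apply is_derive_picard_map, IH.
Qed.

Lemma picard_map_contraction (p q : R -> R) M t :
  (forall t, continuous p t) -> (forall t, continuous q t) ->
  (forall s, Rabs (g (p s) - g (q s)) <= M * exp (2 * Rabs s)) ->
  Rabs (picard_map p t - picard_map q t) <= M * exp (2 * Rabs t) / 2.
Proof.
  intros hp hq hb. unfold picard_map.
  assert (E : RInt (fun s => g (p s) - g (q s)) 0 t
              = RInt (fun s => f s + g (p s)) 0 t - RInt (fun s => f s + g (q s)) 0 t).
  { rewrite <- (RInt_minus (V := R_CompleteNormedModule));
      try apply ex_RInt_of_continuous, integrand_continuous; auto.
    apply RInt_ext. intros x _. unfold minus, plus, opp; simpl. ring. }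
  replace (y0 + RInt (fun s => f s + g (p s)) 0 t - (y0 + RInt (fun s => f s + g (q s)) 0 t))
    with (RInt (fun s => g (p s) - g (q s)) 0 t) by lra.
  apply RInt_weighted_bound; auto. intros s.
  apply (continuous_minus (fun s => g (p s))); apply continuous_comp; auto;
    apply continuous_of_lipschitz, g_lipschitz.
Qed.

Lemma picard_step n t :
  Rabs (picard (S (S n)) t - picard (S n) t) <= (/ 2) ^ S n * exp (2 * Rabs t).
Proof.
  revert t; induction n as [|n IH]; intros t.
  - apply (Rle_trans _ (1 * exp (2 * Rabs t) / 2)); [|simpl; lra].
    apply picard_map_contraction; [apply (picard_continuous 1)|apply (picard_continuous 0)|].
    intros s. pose proof (g_range (picard 1 s)). pose proof (g_range (picard 0 s)).
    assert (1 <= exp (2 * Rabs s)).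
    { pose proof (exp_ineq1_le (2 * Rabs s)). pose proof (Rabs_pos s). lra. }
    apply Rabs_le. simpl in *. lra.
  - replace ((/ 2) ^ S (S n) * exp (2 * Rabs t))
      with ((/ 2) ^ S n * exp (2 * Rabs t) / 2) by (simpl; field).
    apply picard_map_contraction;
      [apply (picard_continuous (S (S n)))|apply (picard_continuous (S n))|].
    intros s. eapply Rle_trans; [apply g_lipschitz | apply IH].
Qed.

Lemma picard_tail N m t : (S N <= m)%nat ->
  Rabs (picard m t - picard (S N) t) <= (/ 2) ^ N * exp (2 * Rabs t).
Proof.
  intros hm. replace m with (S N + (m - S N))%nat by lia.
  assert (H : forall j, Rabs (picard (S N + j) t - picard (S N) t)
                        <= ((/ 2) ^ N - (/ 2) ^ (N + j)) * exp (2 * Rabs t)).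
  { induction j as [|j IH].
    - rewrite !Nat.add_0_r, !Rminus_diag, Rabs_R0. lra.
    - replace (S N + S j)%nat with (S (S (N + j))) by lia.
      replace (S N + j)%nat with (S (N + j)) in IH by lia.
      replace (N + S j)%nat with (S (N + j)) by lia.
      pose proof (picard_step (N + j) t) as Hstep. simpl pow in *.
      replace (picard (S (S (N + j))) t - picard (S N) t) with
        ((picard (S (S (N + j))) t - picard (S (N + j)) t)
         + (picard (S (N + j)) t - picard (S N) t))
        by ring.
      eapply Rle_trans; [apply Rabs_triang | lra]. }
  eapply Rle_trans; [apply H|]. apply Rmult_le_compat_r; [left; apply exp_pos|].
  pose proof (pow_lt (/ 2) (N + (m - S N)) ltac:(lra)). lra.
Qed.

Definition picard_limit (t : R) : R := real (Lim_seq (fun n => picard n t)).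

Lemma is_lim_seq_picard t : is_lim_seq (fun n => picard n t) (picard_limit t).
Proof.
  apply Lim_seq_correct', ex_lim_seq_cauchy_corr. intros eps.
  pose proof (exp_pos (2 * Rabs t)) as he.
  destruct (half_pow_lt (eps / (2 * exp (2 * Rabs t)))) as [N HN].
  { apply Rdiv_lt_0_compat; [apply cond_pos | lra]. }
  exists (S N). intros n m hn hm.
  pose proof (picard_tail N n t hn). pose proof (picard_tail N m t hm).
  apply Rmult_lt_compat_r with (r := 2 * exp (2 * Rabs t)) in HN; [|lra].
  replace (eps / (2 * exp (2 * Rabs t)) * (2 * exp (2 * Rabs t))) with (pos eps) in HN
    by (field; lra).
  replace (picard n t - picard m t)
    with ((picard n t - picard (S N) t) - (picard m t - picard (S N) t)) by ring.
  eapply Rle_lt_trans; [apply Rabs_triang|]. rewrite Rabs_Ropp. lra.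
Qed.

Lemma picard_limit_bound N t :
  Rabs (picard_limit t - picard (S N) t) <= (/ 2) ^ N * exp (2 * Rabs t).
Proof.
  set (p := picard (S N) t).
  assert (Hlim : is_lim_seq (fun n => Rabs (picard n t - p)) (Rabs (picard_limit t - p))).
  { apply (is_lim_seq_continuous (fun x => Rabs (x - p))); [|apply is_lim_seq_picard].
    apply continuity_pt_filterlim.
    change (continuous (fun x => Rabs (x - p)) (picard_limit t)). continuity_R. }
  refine (is_lim_seq_le_loc _ (fun _ => (/ 2) ^ N * exp (2 * Rabs t)) _ _ _ Hlim
            (is_lim_seq_const _)).
  exists (S N). intros n hn. exact (picard_tail N n t hn).
Qed.

Lemma picard_limit_continuous t : continuous picard_limit t.
Proof.
  apply continuous_eps_delta. intros eps he.
  set (W := exp (2 * (Rabs t + 1))).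
  assert (hW : 0 < W) by apply exp_pos.
  destruct (half_pow_lt (eps / (3 * W))) as [N HN]; [apply Rdiv_lt_0_compat; lra|].
  apply Rmult_lt_compat_r with (r := 3 * W) in HN; [|lra].
  replace (eps / (3 * W) * (3 * W)) with eps in HN by (field; lra).
  destruct (proj1 (continuous_eps_delta _ t) (picard_continuous (S N) t) (eps / 3))
    as [d [hd Hd]]; [lra|].
  exists (Rmin d 1). split; [apply Rmin_pos; lra|]. intros s hs.
  assert (hsd : Rabs (s - t) < d) by (eapply Rlt_le_trans; [exact hs | apply Rmin_l]).
  assert (hs1 : Rabs s <= Rabs t + 1).
  { assert (Rabs (s - t) < 1) by (eapply Rlt_le_trans; [exact hs | apply Rmin_r]).
    pose proof (Rabs_triang_inv s t). lra. }
  assert (hWs : exp (2 * Rabs s) <= W) by (apply exp_le_exp; lra).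
  assert (hWt : exp (2 * Rabs t) <= W) by (apply exp_le_exp; pose proof (Rabs_pos t); lra).
  pose proof (pow_lt (/ 2) N ltac:(lra)).
  pose proof (picard_limit_bound N s). pose proof (picard_limit_bound N t).
  specialize (Hd s hsd).
  replace (picard_limit s - picard_limit t) with
    ((picard_limit s - picard (S N) s) + (picard (S N) s - picard (S N) t)
     - (picard_limit t - picard (S N) t)) by ring.
  eapply Rle_lt_trans; [apply Rabs_triang|]. rewrite Rabs_Ropp.
  eapply Rle_lt_trans; [apply Rplus_le_compat_r, Rabs_triang|]. nra.
Qed.

Lemma picard_limit_fixed_point t : picard_limit t = picard_map picard_limit t.
Proof.
  assert (H : Rabs (picard_limit t - picard_map picard_limit t) <= 0).
  { apply le_0_of_le_half_pow with (C := exp (2 * Rabs t)). intros n.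
    pose proof (picard_limit_bound (S n) t) as B1.
    assert (B2 : Rabs (picard_map (picard (S n)) t - picard_map picard_limit t)
                 <= (/ 2) ^ n * exp (2 * Rabs t) / 2).
    { apply picard_map_contraction;
        [apply (picard_continuous (S n)) | apply picard_limit_continuous |].
      intros s. eapply Rle_trans; [apply g_lipschitz|].
      rewrite <- Rabs_Ropp, Ropp_minus_distr. apply picard_limit_bound. }
    replace (picard_limit t - picard_map picard_limit t) with
      ((picard_limit t - picard (S (S n)) t)
       + (picard_map (picard (S n)) t - picard_map picard_limit t)) by (simpl; ring).
    eapply Rle_trans; [apply Rabs_triang|]. simpl pow in *. lra. }
  pose proof (Rabs_pos (picard_limit t - picard_map picard_limit t)).
  apply Rminus_diag_uniq, Rabs_eq_0. lra.
Qed.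

Lemma is_derive_picard_limit t : is_derive picard_limit t (f t + g (picard_limit t)).
Proof.
  apply (is_derive_ext (picard_map picard_limit)).
  - intros s. symmetry. apply picard_limit_fixed_point.
  - apply is_derive_picard_map, picard_limit_continuous.
Qed.

Lemma picard_limit_0 : picard_limit 0 = y0.
Proof.
  rewrite picard_limit_fixed_point. unfold picard_map.
  rewrite (@RInt_point R_CompleteNormedModule). unfold zero; simpl. ring.
Qed.

End Picard.

Lemma exists_primitive_nonneg (q : R -> R) : (forall t, 0 <= t -> continuous q t) ->
  exists Q, Q 0 = 0 /\ forall t, 0 <= t -> is_derive Q t (q t).
Proof.
  intros hq. exists (fun t => RInt (fun s => q (Rabs s)) 0 t). split.
  - apply (@RInt_point R_CompleteNormedModule).
  - intros t ht. rewrite <- (Rabs_pos_eq t) at 2 by exact ht.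
    apply (is_derive_RInt_continuous (fun s => q (Rabs s))). intros y.
    apply continuous_comp; [apply continuous_Rabs | apply hq, Rabs_pos].
Qed.

Lemma is_derive_integrating_factor (D dD Q q : R -> R) t :
  is_derive D t (dD t) -> is_derive Q t (q t) ->
  is_derive (fun s => D s * exp (Q s)) t ((dD t + q t * D t) * exp (Q t)).
Proof.
  intros hD hQ.
  replace ((dD t + q t * D t) * exp (Q t))
    with (dD t * exp (Q t) + D t * (q t * exp (Q t))) by ring.
  apply (@is_derive_mult R_AbsRing D (fun s => exp (Q s)));
    [exact hD | | intros; apply Rmult_comm].
  apply (@is_derive_comp R_AbsRing R_NormedModule exp Q); [apply is_derive_exp | exact hQ].
Qed.

Section Linear_comparison.

Variables (D dD q : R -> R).
Hypothesis q_cont : forall t, 0 <= t -> continuous q t.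
Hypothesis D_derive : forall t, 0 <= t -> is_derive D t (dD t).
Hypothesis D0_nonneg : 0 <= D 0.

Lemma linear_comparison :
  (forall t, 0 <= t -> 0 <= dD t + q t * D t) -> forall t, 0 <= t -> 0 <= D t.
Proof.
  intros hsign t ht.
  destruct (exists_primitive_nonneg q q_cont) as [Q [hQ0 hQ]].
  assert (H : D 0 * exp (Q 0) <= D t * exp (Q t)).
  { apply (derive_nonneg_le (fun s => D s * exp (Q s))
                            (fun s => (dD s + q s * D s) * exp (Q s))); auto.
    - intros s hs. apply is_derive_integrating_factor; [apply D_derive | apply hQ]; lra.
    - intros s hs. apply Rmult_le_pos; [apply hsign; lra | left; apply exp_pos]. }
  rewrite hQ0, exp_0 in H. pose proof (exp_pos (Q t)). nra.
Qed.

Lemma linear_comparison_strict :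
  (forall t, 0 <= t -> 0 < dD t + q t * D t) -> forall t, 0 < t -> 0 < D t.
Proof.
  intros hsign t ht.
  destruct (exists_primitive_nonneg q q_cont) as [Q [hQ0 hQ]].
  assert (H : D 0 * exp (Q 0) < D t * exp (Q t)).
  { apply (derive_pos_lt (fun s => D s * exp (Q s))
                         (fun s => (dD s + q s * D s) * exp (Q s))); auto.
    - intros s hs. apply is_derive_integrating_factor; [apply D_derive | apply hQ]; lra.
    - intros s hs. apply Rmult_lt_0_compat; [apply hsign; lra | apply exp_pos]. }
  rewrite hQ0, exp_0 in H. pose proof (exp_pos (Q t)). nra.
Qed.

End Linear_comparison.

Lemma linear_homogeneous_zero (D q : R -> R) :
  (forall t, 0 <= t -> continuous q t) ->
  (forall t, 0 <= t -> is_derive D t (- q t * D t)) -> D 0 = 0 ->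
  forall t, 0 <= t -> D t = 0.
Proof.
  intros hq hD hD0 t ht.
  assert (0 <= D t).
  { apply (linear_comparison D (fun s => - q s * D s) q); auto; [lra|].
    intros s _. lra. }
  assert (0 <= - D t).
  { apply (linear_comparison (fun s => - D s) (fun s => - (- q s * D s)) q); auto; [| lra |].
    - intros s hs. apply (@is_derive_opp R_AbsRing R_NormedModule), hD, hs.
    - intros s _. lra. }
  lra.
Qed.

Lemma has_deriv_on_nonneg_of_is_derive (f df : R -> R) :
  (forall t, 0 <= t -> is_derive f t (df t)) -> has_deriv_on_nonneg f df.
Proof.
  intros H t ht eps he.
  destruct (proj1 (is_derive_Reals f t (df t)) (H t ht) eps he) as [d Hd].
  exists d. split; [apply cond_pos|].
  intros s _ hst. destruct (Req_dec s t) as [->|ne].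
  - rewrite !Rminus_diag, Rmult_0_r, Rminus_0_r, Rabs_R0. lra.
  - specialize (Hd (s - t) ltac:(lra) hst). replace (t + (s - t)) with s in Hd by ring.
    replace (f s - f t - df t * (s - t)) with (((f s - f t) / (s - t) - df t) * (s - t))
      by (field; lra).
    rewrite Rabs_mult. apply Rmult_le_compat_r; [apply Rabs_pos | lra].
Qed.

Lemma cont_on_nonneg_of_continuous (g : R -> R) :
  (forall t, 0 <= t -> continuous g t) -> cont_on_nonneg g.
Proof.
  intros H t ht eps he.
  destruct (proj1 (continuous_eps_delta g t) (H t ht) eps he) as [d [hd Hd]].
  exists d. split; auto.
Qed.

(* Coquelicot derivatives are two-sided: continue [f] to the left of [0] along
   its tangent, so that the one-sided derivative at [0] becomes a derivative. *)
Definition extend_left (f df : R -> R) (t : R) : R :=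
  if Rle_dec 0 t then f t else f 0 + df 0 * t.

Lemma extend_left_nonneg f df t : 0 <= t -> extend_left f df t = f t.
Proof. intros ht. unfold extend_left. destruct (Rle_dec 0 t); [reflexivity | lra]. Qed.

Lemma is_derive_extend_left (f df : R -> R) : has_deriv_on_nonneg f df ->
  forall t, 0 <= t -> is_derive (extend_left f df) t (df t).
Proof.
  intros H t ht. apply is_derive_Reals. intros eps he.
  destruct (H t ht (eps / 2)) as [d [hd Hd]]; [lra|].
  assert (Hquot : forall h, h <> 0 -> 0 <= t + h -> Rabs h < d ->
            Rabs ((extend_left f df (t + h) - extend_left f df t) / h - df t) < eps).
  { intros h hh hth hhd. rewrite !extend_left_nonneg by lra.
    specialize (Hd (t + h) hth). replace (t + h - t) with h in Hd by ring.
    specialize (Hd hhd).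
    replace ((f (t + h) - f t) / h - df t) with ((f (t + h) - f t - df t * h) / h) by (field; auto).
    unfold Rdiv. rewrite Rabs_mult, Rabs_inv.
    apply Rmult_lt_reg_r with (Rabs h); [apply Rabs_pos_lt; auto|].
    rewrite Rmult_assoc, Rinv_l by (apply Rabs_no_R0; auto). pose proof (Rabs_pos_lt h hh). nra. }
  destruct (Rle_lt_or_eq_dec 0 t ht) as [tpos | <-].
  - exists (mkposreal _ (Rmin_pos d t hd tpos)). intros h hh hhd. simpl in hhd.
    apply Hquot; auto.
    + pose proof (Rmin_r d t). apply Rabs_lt_between in hhd. lra.
    + eapply Rlt_le_trans; [exact hhd | apply Rmin_l].
  - exists (mkposreal _ hd). intros h hh hhd. simpl in hhd.
    destruct (Rle_or_lt 0 h) as [hp | hn]; [apply Hquot; auto; lra|].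
    unfold extend_left. destruct (Rle_dec 0 (0 + h)); [lra|]. destruct (Rle_dec 0 0); [|lra].
    replace ((f 0 + df 0 * (0 + h) - f 0) / h - df 0) with 0 by (field; auto).
    rewrite Rabs_R0; lra.
Qed.

Lemma Rinv_le_1 a : 1 <= a -> / a <= 1.
Proof. intros ha. rewrite <- Rinv_1. apply Rinv_le_contravar; lra. Qed.

Lemma Rabs_sqrt_sub_le a b : 0 <= a -> 0 <= b ->
  Rabs (sqrt a - sqrt b) <= sqrt (Rabs (a - b)).
Proof.
  assert (H : forall x y, 0 <= y <= x -> sqrt x - sqrt y <= sqrt (x - y)).
  { intros x y hxy.
    pose proof (sqrt_sqrt x ltac:(lra)). pose proof (sqrt_sqrt y ltac:(lra)).
    pose proof (sqrt_sqrt (x - y) ltac:(lra)).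
    pose proof (sqrt_pos x). pose proof (sqrt_pos y). pose proof (sqrt_pos (x - y)). nra. }
  intros ha hb. destruct (Rle_or_lt b a) as [hab | hab].
  - assert (sqrt b <= sqrt a) by (apply sqrt_le_1_alt; lra).
    rewrite Rabs_pos_eq, (Rabs_pos_eq (a - b)) by lra. apply H. lra.
  - assert (sqrt a <= sqrt b) by (apply sqrt_le_1_alt; lra).
    rewrite Rabs_left1, Rabs_left1 by lra. rewrite !Ropp_minus_distr. apply H. lra.
Qed.

Definition forcing (A w t : R) : R := sqrt (A ^ 2 * t ^ 2 + w).

Lemma forcing_continuous A w t : continuous (forcing A w) t.
Proof. unfold forcing. continuity_R. Qed.

Lemma forcing_nonneg A w t : 0 <= forcing A w t.
Proof. apply sqrt_pos. Qed.

Lemma forcing_lt_forcing A w1 w2 t : 0 <= w1 < w2 -> forcing A w1 t < forcing A w2 t.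
Proof.
  intros hw. unfold forcing. apply sqrt_lt_1_alt.
  pose proof (pow2_ge_0 A). pose proof (pow2_ge_0 t). split; nra.
Qed.

Lemma Rabs_forcing_sub_le A w1 w2 t : 0 <= w1 -> 0 <= w2 ->
  Rabs (forcing A w1 t - forcing A w2 t) <= sqrt (Rabs (w1 - w2)).
Proof.
  intros h1 h2. unfold forcing. pose proof (pow2_ge_0 A). pose proof (pow2_ge_0 t).
  replace (w1 - w2) with ((A ^ 2 * t ^ 2 + w1) - (A ^ 2 * t ^ 2 + w2)) by ring.
  apply Rabs_sqrt_sub_le; nra.
Qed.

Lemma forcing_ge_linear A w t : 0 <= w -> 0 <= t -> A * t <= forcing A w t.
Proof.
  intros hw ht. unfold forcing. eapply Rle_trans; [apply Rle_abs|].
  rewrite <- sqrt_Rsqr_abs. apply sqrt_le_1_alt. unfold Rsqr. simpl. nra.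
Qed.

Lemma forcing_scaled_le A w s t : 0 <= w -> 0 <= s <= t ->
  s * forcing A w t <= t * forcing A w s.
Proof.
  intros hw hst. unfold forcing. pose proof (pow2_ge_0 A).
  pose proof (sqrt_sqrt (A ^ 2 * t ^ 2 + w) ltac:(nra)) as Et.
  pose proof (sqrt_sqrt (A ^ 2 * s ^ 2 + w) ltac:(nra)) as Es.
  pose proof (sqrt_pos (A ^ 2 * t ^ 2 + w)). pose proof (sqrt_pos (A ^ 2 * s ^ 2 + w)).
  assert (Hsq : (s * sqrt (A ^ 2 * t ^ 2 + w)) ^ 2 <= (t * sqrt (A ^ 2 * s ^ 2 + w)) ^ 2).
  { replace ((s * sqrt (A ^ 2 * t ^ 2 + w)) ^ 2)
      with (s ^ 2 * (sqrt (A ^ 2 * t ^ 2 + w) * sqrt (A ^ 2 * t ^ 2 + w))) by ring.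
    replace ((t * sqrt (A ^ 2 * s ^ 2 + w)) ^ 2)
      with (t ^ 2 * (sqrt (A ^ 2 * s ^ 2 + w) * sqrt (A ^ 2 * s ^ 2 + w))) by ring.
    rewrite Et, Es. assert (s ^ 2 <= t ^ 2) by nra. nra. }
  assert (0 <= s * sqrt (A ^ 2 * t ^ 2 + w)) by nra.
  assert (0 <= t * sqrt (A ^ 2 * s ^ 2 + w)) by nra. nra.
Qed.

Definition clamp_inv (x : R) : R := / Rmax 1 x.

Lemma clamp_inv_range x : 0 < clamp_inv x <= 1.
Proof.
  unfold clamp_inv. pose proof (Rmax_l 1 x).
  split; [apply Rinv_0_lt_compat; lra | apply Rinv_le_1; lra].
Qed.

Lemma clamp_inv_ge_1 x : 1 <= x -> clamp_inv x = / x.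
Proof. intros hx. unfold clamp_inv. rewrite Rmax_right by exact hx. reflexivity. Qed.

Lemma clamp_inv_lipschitz x y : Rabs (clamp_inv x - clamp_inv y) <= Rabs (x - y).
Proof.
  unfold clamp_inv. pose proof (Rmax_l 1 x) as hx. pose proof (Rmax_l 1 y) as hy.
  assert (Hmax : Rabs (Rmax 1 y - Rmax 1 x) <= Rabs (x - y)).
  { rewrite <- Rabs_Ropp, Ropp_minus_distr.
    unfold Rmax; destruct (Rle_dec 1 x), (Rle_dec 1 y); apply Rabs_le;
      pose proof (Rabs_le_between (x - y)); unfold Rabs; destruct (Rcase_abs (x - y)); lra. }
  replace (/ Rmax 1 x - / Rmax 1 y) with ((Rmax 1 y - Rmax 1 x) * / (Rmax 1 x * Rmax 1 y))
    by (field; lra).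
  rewrite Rabs_mult, (Rabs_pos_eq (/ _)) by (left; apply Rinv_0_lt_compat; nra).
  assert (/ (Rmax 1 x * Rmax 1 y) <= 1) by (apply Rinv_le_1; nra).
  pose proof (Rabs_pos (Rmax 1 y - Rmax 1 x)).
  pose proof (Rinv_0_lt_compat (Rmax 1 x * Rmax 1 y) ltac:(nra)).
  nra.
Qed.

(* This is [U = 1 / v]; the clamp in [clamp_inv] is inactive along it since [U >= 1]. *)
Definition recip_sol (A w : R) : R -> R := picard_limit (forcing A w) clamp_inv 1.

Definition sol (A w t : R) : R := / recip_sol A w t.

Lemma recip_sol_0 A w : recip_sol A w 0 = 1.
Proof.
  apply picard_limit_0;
    [apply forcing_continuous | apply clamp_inv_lipschitz |
     intros x; pose proof (clamp_inv_range x); lra].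
Qed.

Lemma is_derive_recip_sol A w t :
  is_derive (recip_sol A w) t (forcing A w t + clamp_inv (recip_sol A w t)).
Proof.
  apply is_derive_picard_limit;
    [apply forcing_continuous | apply clamp_inv_lipschitz |
     intros x; pose proof (clamp_inv_range x); lra].
Qed.

Lemma recip_sol_increasing A w s t : s < t -> recip_sol A w s < recip_sol A w t.
Proof.
  intros hst.
  apply (derive_pos_lt _ (fun x => forcing A w x + clamp_inv (recip_sol A w x)) s t hst);
    [intros; apply is_derive_recip_sol|].
  intros x _. pose proof (forcing_nonneg A w x). pose proof (clamp_inv_range (recip_sol A w x)).
  lra.
Qed.

Lemma recip_sol_ge_1 A w t : 0 <= t -> 1 <= recip_sol A w t.
Proof.
  intros [ht | <-]; rewrite <- (recip_sol_0 A w); [left; apply recip_sol_increasing, ht | lra].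
Qed.

Lemma is_derive_recip_sol_nonneg A w t : 0 <= t ->
  is_derive (recip_sol A w) t (forcing A w t + / recip_sol A w t).
Proof.
  intros ht. rewrite <- clamp_inv_ge_1 by (apply recip_sol_ge_1, ht). apply is_derive_recip_sol.
Qed.

Lemma recip_sol_continuous A w t : continuous (recip_sol A w) t.
Proof. apply (ex_derive_continuous (recip_sol A w)). eexists. apply is_derive_recip_sol. Qed.

Lemma recip_sol_lower A w t : 0 <= w -> 0 < t ->
  1 + t * forcing A w t / 2 < recip_sol A w t.
Proof.
  intros hw ht.
  assert (H : t * recip_sol A w 0 - 0 ^ 2 * forcing A w t / 2
              < t * recip_sol A w t - t ^ 2 * forcing A w t / 2).
  { apply (derive_pos_lt (fun s => t * recip_sol A w s - s ^ 2 * forcing A w t / 2)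
             (fun s => t * (forcing A w s + / recip_sol A w s) - s * forcing A w t)); auto.
    - intros s hs. pose proof (is_derive_recip_sol_nonneg A w s ltac:(lra)) as hU.
      auto_derive; [eexists; exact hU|].
      change (fun x => recip_sol A w x) with (recip_sol A w).
      rewrite (is_derive_unique _ _ _ hU). field.
      pose proof (recip_sol_ge_1 A w s ltac:(lra)). lra.
    - intros s hs. pose proof (forcing_scaled_le A w s t hw hs).
      pose proof (recip_sol_ge_1 A w s ltac:(lra)).
      pose proof (Rinv_0_lt_compat (recip_sol A w s) ltac:(lra)). nra. }
  rewrite recip_sol_0 in H. nra.
Qed.

Section Two_parameters.

Variables (A w1 w2 : R).

Let U1 := recip_sol A w1.
Let U2 := recip_sol A w2.

Lemma is_derive_recip_sol_sub t : 0 <= t ->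
  is_derive (fun s => U1 s - U2 s) t
    (forcing A w1 t - forcing A w2 t - / (U1 t * U2 t) * (U1 t - U2 t)).
Proof.
  intros ht. pose proof (recip_sol_ge_1 A w1 t ht). pose proof (recip_sol_ge_1 A w2 t ht).
  replace (forcing A w1 t - forcing A w2 t - / (U1 t * U2 t) * (U1 t - U2 t))
    with ((forcing A w1 t + / U1 t) - (forcing A w2 t + / U2 t))
    by (unfold U1, U2 in *; field; lra).
  apply (@is_derive_minus R_AbsRing R_NormedModule); apply is_derive_recip_sol_nonneg, ht.
Qed.

Lemma recip_sol_prod_inv_continuous t : 0 <= t ->
  continuous (fun s => / (U1 s * U2 s)) t.
Proof.
  intros ht. pose proof (recip_sol_ge_1 A w1 t ht). pose proof (recip_sol_ge_1 A w2 t ht).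
  apply (continuous_Rinv_comp (fun s => U1 s * U2 s)); [|unfold U1, U2; nra].
  apply (continuous_mult U1 U2); apply recip_sol_continuous.
Qed.

Lemma recip_sol_sub_le c : 0 <= c ->
  (forall s, 0 <= s -> forcing A w1 s - forcing A w2 s <= c) ->
  forall t, 0 <= t -> U1 t - U2 t <= c * t.
Proof.
  intros hc hF t ht.
  enough (0 <= c * t - (U1 t - U2 t)) by lra.
  apply (linear_comparison (fun s => c * s - (U1 s - U2 s))
           (fun s => c - (forcing A w1 s - forcing A w2 s - / (U1 s * U2 s) * (U1 s - U2 s)))
           (fun s => / (U1 s * U2 s))); auto.
  - apply recip_sol_prod_inv_continuous.
  - intros s hs. apply (@is_derive_minus R_AbsRing R_NormedModule (fun s => c * s)).
    + auto_derive; [exact I | ring].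
    + apply is_derive_recip_sol_sub, hs.
  - unfold U1, U2. rewrite !recip_sol_0. lra.
  - intros s hs. specialize (hF s hs).
    pose proof (recip_sol_ge_1 A w1 s hs). pose proof (recip_sol_ge_1 A w2 s hs).
    assert (0 <= / (U1 s * U2 s)) by (left; apply Rinv_0_lt_compat; unfold U1, U2; nra).
    assert (0 <= / (U1 s * U2 s) * (c * s)) by (apply Rmult_le_pos; [|apply Rmult_le_pos]; lra).
    lra.
Qed.

Lemma recip_sol_lt_recip_sol : 0 <= w2 < w1 -> forall t, 0 < t -> U2 t < U1 t.
Proof.
  intros hw t ht.
  enough (0 < U1 t - U2 t) by lra.
  apply (linear_comparison_strict (fun s => U1 s - U2 s)
           (fun s => forcing A w1 s - forcing A w2 s - / (U1 s * U2 s) * (U1 s - U2 s))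
           (fun s => / (U1 s * U2 s))); auto.
  - apply recip_sol_prod_inv_continuous.
  - apply is_derive_recip_sol_sub.
  - unfold U1, U2. rewrite !recip_sol_0. lra.
  - intros s _. pose proof (forcing_lt_forcing A w2 w1 s hw). lra.
Qed.

End Two_parameters.

Lemma sol_range A w t : 0 <= t -> 0 < sol A w t <= 1.
Proof.
  intros ht. unfold sol. pose proof (recip_sol_ge_1 A w t ht).
  split; [apply Rinv_0_lt_compat; lra | apply Rinv_le_1; lra].
Qed.

Lemma is_derive_sol A w t : 0 <= t -> is_derive (sol A w) t (rhs A w t (sol A w t)).
Proof.
  intros ht. pose proof (recip_sol_ge_1 A w t ht).
  replace (rhs A w t (sol A w t))
    with (- (forcing A w t + / recip_sol A w t) / (recip_sol A w t) ^ 2)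
    by (unfold rhs, sol, forcing; field; lra).
  apply (is_derive_inv (recip_sol A w)); [apply is_derive_recip_sol_nonneg, ht | lra].
Qed.

Lemma sol_continuous A w t : 0 <= t -> continuous (sol A w) t.
Proof. intros ht. apply (ex_derive_continuous (sol A w)). eexists. apply is_derive_sol, ht. Qed.

Lemma sol_is_solution A w : is_solution A w (sol A w).
Proof.
  split; [unfold sol; rewrite recip_sol_0; apply Rinv_1|].
  exists (fun t => rhs A w t (sol A w t)). split; [|split; [|reflexivity]].
  - apply has_deriv_on_nonneg_of_is_derive. intros t ht. apply is_derive_sol, ht.
  - apply cont_on_nonneg_of_continuous. intros t ht.
    pose proof (sol_continuous A w t ht). unfold rhs. continuity_R.
Qed.

Lemma rhs_sub A w t x y :
  rhs A w t x - rhs A w t y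
  = - (forcing A w t * (x + y) + x * x + x * y + y * y) * (x - y).
Proof. unfold rhs, forcing. ring. Qed.

Lemma sol_unique A w u : is_solution A w u -> forall t, 0 <= t -> u t = sol A w t.
Proof.
  intros [hu0 [du [hdu [_ hrhs]]]].
  set (y := extend_left u du).
  assert (hy : forall t, 0 <= t -> is_derive y t (rhs A w t (y t))).
  { intros t ht. unfold y. rewrite extend_left_nonneg, <- hrhs by exact ht.
    apply is_derive_extend_left; assumption. }
  set (q := fun t => forcing A w t * (y t + sol A w t) + y t * y t + y t * sol A w t
                     + sol A w t * sol A w t).
  assert (hq : forall t, 0 <= t -> continuous q t).
  { intros t ht. pose proof (sol_continuous A w t ht). pose proof (forcing_continuous A w t).
    assert (continuous y t) by (apply (ex_derive_continuous y); eexists; apply hy, ht).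
    unfold q. continuity_R. }
  assert (Hzero : forall t, 0 <= t -> y t - sol A w t = 0).
  { apply (linear_homogeneous_zero (fun t => y t - sol A w t) q hq).
    - intros t ht.
      replace (- q t * (y t - sol A w t)) with (rhs A w t (y t) - rhs A w t (sol A w t))
        by (rewrite rhs_sub; unfold q; ring).
      apply (@is_derive_minus R_AbsRing R_NormedModule); [apply hy | apply is_derive_sol]; exact ht.
    - unfold y, sol. rewrite extend_left_nonneg, hu0, recip_sol_0, Rinv_1 by lra. lra. }
  intros t ht. specialize (Hzero t ht). unfold y in Hzero.
  rewrite extend_left_nonneg in Hzero by exact ht. lra.
Qed.

Lemma sol_decreasing A w s t : 0 <= s -> s < t -> sol A w t < sol A w s.
Proof.
  intros hs hst. unfold sol. pose proof (recip_sol_ge_1 A w s hs).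
  apply Rinv_lt_contravar; [|apply recip_sol_increasing, hst].
  pose proof (recip_sol_increasing A w s t hst). nra.
Qed.

Lemma sol_lt_sol A w1 w2 t : 0 < t -> 0 <= w1 < w2 -> sol A w2 t < sol A w1 t.
Proof.
  intros ht hw. unfold sol. pose proof (recip_sol_ge_1 A w1 t ltac:(lra)).
  pose proof (recip_sol_lt_recip_sol A w2 w1 hw t ht).
  apply Rinv_lt_contravar; [nra | assumption].
Qed.

Lemma sol_upper A w t : 0 <= w -> 0 < t ->
  sol A w t < 2 / (2 + t * sqrt (A ^ 2 * t ^ 2 + w)).
Proof.
  intros hw ht. pose proof (recip_sol_lower A w t hw ht). pose proof (forcing_nonneg A w t).
  assert (0 <= t * forcing A w t) by (apply Rmult_le_pos; lra).
  replace (2 / (2 + t * sqrt (A ^ 2 * t ^ 2 + w))) with (/ (1 + t * forcing A w t / 2))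
    by (unfold forcing; field; fold (forcing A w t); lra).
  unfold sol. apply Rinv_lt_contravar; [nra | assumption].
Qed.

Lemma sol_lim A w : 0 < A -> 0 <= w -> is_lim (sol A w) p_infty 0.
Proof.
  intros hA hw. apply is_lim_spec. intros eps. simpl. pose proof (cond_pos eps) as he.
  exists (Rmax 1 (2 / (A * eps))). intros t ht.
  assert (ht1 : 1 < t) by (eapply Rle_lt_trans; [apply Rmax_l | exact ht]).
  assert (ht2 : 2 / (A * eps) < t) by (eapply Rle_lt_trans; [apply Rmax_r | exact ht]).
  apply Rmult_lt_compat_r with (r := A * eps) in ht2; [|nra].
  replace (2 / (A * eps) * (A * eps)) with 2 in ht2 by (field; lra).
  pose proof (sol_upper A w t hw ltac:(lra)). pose proof (sol_range A w t ltac:(lra)).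
  pose proof (forcing_ge_linear A w t hw ltac:(lra)). unfold forcing in *.
  rewrite Rminus_0_r, Rabs_pos_eq by lra.
  set (F := sqrt (A ^ 2 * t ^ 2 + w)) in *.
  assert (2 / (2 + t * F) < eps); [|lra].
  apply Rmult_lt_reg_r with (2 + t * F); [nra|].
  unfold Rdiv. rewrite Rmult_assoc, Rinv_l by nra.
  assert (A * t * (eps * t) <= F * (eps * t)) by (apply Rmult_le_compat_r; nra).
  nra.
Qed.

Lemma time_mul_sol_le A w t : 0 < A -> 0 <= w -> 0 < t -> t * sol A w t <= 1 + / A.
Proof.
  intros hA hw ht. pose proof (sol_upper A w t hw ht) as Hup.
  pose proof (sol_range A w t ltac:(lra)).
  pose proof (forcing_ge_linear A w t hw ltac:(lra)). unfold forcing in *.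
  set (F := sqrt (A ^ 2 * t ^ 2 + w)) in *.
  assert (HF : sol A w t * (2 + t * F) < 2).
  { apply Rmult_lt_compat_r with (r := 2 + t * F) in Hup; [|nra].
    unfold Rdiv in Hup. rewrite Rmult_assoc, Rinv_l in Hup by nra. lra. }
  assert (Ha : A * / A = 1) by (field; lra). pose proof (Rinv_0_lt_compat A hA).
  assert (t * sol A w t * (2 + A * t * t) <= 2 * t).
  { assert (A * t * t <= t * F) by nra.
    assert (t * sol A w t * (A * t * t) <= t * sol A w t * (t * F))
      by (apply Rmult_le_compat_l; nra).
    apply Rmult_lt_compat_l with (r := t) in HF; [|lra]. nra. }
  assert (2 * t <= (1 + / A) * (2 + A * t * t)).
  { replace ((1 + / A) * (2 + A * t * t))
      with (2 + A * t * t + 2 * / A + A * / A * (t * t)) by ring.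
    rewrite Ha. pose proof (Rle_0_sqr (t - 1)). unfold Rsqr in *. nra. }
  assert (0 < 2 + A * t * t) by nra. nra.
Qed.

Lemma sol_sub_le A w w0 t : 0 < A -> 0 <= w -> 0 <= w0 -> 0 < t ->
  Rabs (sol A w t - sol A w0 t) <= (1 + / A) * sqrt (Rabs (w - w0)).
Proof.
  intros hA hw hw0 ht. set (c := sqrt (Rabs (w - w0))).
  assert (hc : 0 <= c) by apply sqrt_pos.
  assert (HF : forall w1 w2, 0 <= w1 -> 0 <= w2 -> Rabs (w1 - w2) = Rabs (w - w0) ->
                 recip_sol A w1 t - recip_sol A w2 t <= c * t).
  { intros w1 w2 h1 h2 E. apply recip_sol_sub_le; [exact hc | | lra].
    intros s _. unfold c. rewrite <- E.
    eapply Rle_trans; [apply Rle_abs | apply Rabs_forcing_sub_le; assumption]. }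
  pose proof (HF w w0 hw hw0 eq_refl). pose proof (HF w0 w hw0 hw (Rabs_minus_sym _ _)).
  pose proof (recip_sol_ge_1 A w t ltac:(lra)). pose proof (recip_sol_ge_1 A w0 t ltac:(lra)).
  pose proof (time_mul_sol_le A w0 t hA hw0 ht). pose proof (sol_range A w t ltac:(lra)).
  assert (E : sol A w t - sol A w0 t
              = (recip_sol A w0 t - recip_sol A w t) * sol A w t * sol A w0 t)
    by (unfold sol; field; lra).
  rewrite E, !Rabs_mult, (Rabs_pos_eq (sol A w t)), (Rabs_pos_eq (sol A w0 t))
    by (pose proof (sol_range A w0 t ltac:(lra)); lra).
  assert (Rabs (recip_sol A w0 t - recip_sol A w t) <= c * t) by (apply Rabs_le; lra).
  pose proof (Rabs_pos (recip_sol A w0 t - recip_sol A w t)).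
  pose proof (sol_range A w0 t ltac:(lra)).
  set (d := Rabs (recip_sol A w0 t - recip_sol A w t)) in *.
  apply Rle_trans with (d * sol A w0 t).
  { assert (0 <= d * sol A w0 t) by nra. nra. }
  apply Rle_trans with (c * (t * sol A w0 t)); [nra|].
  rewrite Rmult_comm. apply Rmult_le_compat_r; assumption.
Qed.

Lemma sol_continuous_in_w A : 0 < A ->
  forall w0, 0 <= w0 -> forall eps, 0 < eps -> exists delta, 0 < delta /\
    forall w, 0 <= w -> Rabs (w - w0) < delta ->
      forall t, 0 < t -> Rabs (sol A w t - sol A w0 t) <= eps.
Proof.
  intros hA w0 hw0 eps he. set (K := 1 + / A).
  assert (hK : 0 < K) by (pose proof (Rinv_0_lt_compat A hA); unfold K; lra).
  exists ((eps / K) ^ 2). split; [apply pow_lt, Rdiv_lt_0_compat; lra|].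
  intros w hw hd t ht. eapply Rle_trans; [apply sol_sub_le; assumption|]. fold K.
  assert (sqrt (Rabs (w - w0)) <= eps / K).
  { rewrite <- (sqrt_pow2 (eps / K)) by (left; apply Rdiv_lt_0_compat; lra).
    apply sqrt_le_1_alt. lra. }
  apply Rmult_le_compat_l with (r := K) in H; [|lra].
  replace (K * (eps / K)) with eps in H by (field; lra). exact H.
Qed.

Theorem lemma4p1 (A : R) (hA : 0 < A) :
  exists V : R -> R -> R,
    (forall w, 0 <= w ->
       is_solution A w (V w) /\
       (forall u, is_solution A w u -> forall t, 0 <= t -> u t = V w t) /\
       (forall t, 0 <= t -> 0 < V w t <= 1)) /\
    (forall w, 0 <= w -> forall s t, 0 <= s -> s < t -> V w t < V w s) /\
    (forall t, 0 < t -> forall w1 w2, 0 <= w1 -> w1 < w2 -> V w2 t < V w1 t) /\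
    (forall t w, 0 < t -> 0 <= w ->
       V w t < 2 / (2 + t * sqrt (A ^ 2 * t ^ 2 + w))) /\
    (forall w, 0 <= w -> is_lim (V w) p_infty 0) /\
    (forall w0, 0 <= w0 -> forall eps, 0 < eps -> exists delta, 0 < delta /\
       forall w, 0 <= w -> Rabs (w - w0) < delta ->
         forall t, 0 < t -> Rabs (V w t - V w0 t) <= eps).
Proof.
  exists (sol A). split; [|split; [|split; [|split; [|split]]]].
  - intros w hw. split; [|split].
    + apply sol_is_solution.
    + apply sol_unique.
    + intros t ht. apply sol_range, ht.
  - intros w _ s t hs hst. apply sol_decreasing; assumption.
  - intros t ht w1 w2 h1 h2. apply sol_lt_sol; [assumption | lra].
  - intros t w ht hw. apply sol_upper; assumption.
  - intros w hw. apply sol_lim; assumption.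
  - apply sol_continuous_in_w, hA.
Qed.
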